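(* Let $X_0=0$ and $X_n=\sum_{j=1}^{X_{n-1}}\xi_{n,j}+\varepsilon_n$ for $n\ge1$, where $\{\xi_{n,j},\varepsilon_n\}$ are independent nonnegative integer-valued random variables with $\xi_{n,j}$, $j\in\mathbb N$, identically distributed for each $n$. Let $G_n(x)=\mathbb E x^{\xi_{n,1}}$, $H_n(x)=\mathbb E x^{\varepsilon_n}$, $\rho_n=G_n'(1)$, and $m_{n,k}=H_n^{(k)}(1)$ (finite for $k=1,2$); assume $G_n^{(s)}(1)<\infty$ for all $s\ge1$ and $n$. Assume (i) $\rho_n<1$, $\lim_n\rho_n=1$, $\sum_{n=1}^\infty(1-\rho_n)=\infty$; (ii) $\lim_{n\to\infty}G_n''(1)/(1-\rho_n)=\nu\in(0,\infty)$; (iii) $\lim_{n\to\infty}G_n^{(s)}(1)/(1-\rho_n)=0$ for every $s\ge3$; (iv) $\lim_{n\to\infty}m_{n,1}/(1-\rho_n)=\lambda$ and $\lim_{n\to\infty}m_{n,2}/(1-\rho_n)=0$. Then $X_n$ converges in distribution to the negative binomial distribution $\mathrm{NB}(2\lambda/\nu,\ \nu/(2+\nu))$.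
   Context: For $r>0$, $p\in(0,1)$, $\mathrm{NB}(r,p)$ is the distribution on $\{0,1,2,\dots\}$ with $\mathbb P\{X=k\}=\binom{k+r-1}{r-1}(1-p)^rp^k$, where $\binom{k+r-1}{r-1}=\frac{(k+r-1)(k+r-2)\cdots r}{k!}$; its generating function is $\big(\frac{1-p}{1-px}\big)^r$. For $\lambda=0$ the distribution is understood as the point mass at $0$. *)

From Stdlib Require Import Reals Lra Lia Factorial.
Open Scope R_scope.

Definition is_pmf (p : nat -> R) : Prop :=
  (forall k, 0 <= p k) /\ infinite_sum p 1.

Definition delta0 (k : nat) : R := if Nat.eqb k 0 then 1 else 0.

Definition conv (a b : nat -> R) (k : nat) : R :=
  sum_f_R0 (fun i => a i * b (k - i)%nat) k.

(* m-fold convolution power: law of the sum of m i.i.d. copies (m = 0: point mass at 0). *)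
Fixpoint conv_pow (g : nat -> R) (m : nat) : nat -> R :=
  match m with
  | O => delta0
  | S m' => conv (conv_pow g m') g
  end.

Fixpoint falling (k s : nat) : nat :=
  match s with
  | O => 1%nat
  | S s' => (falling k s' * (k - s'))%nat
  end.

(* fmom p s l : the s-th derivative at 1 of the generating function
   sum_k p k x^k (i.e. the s-th factorial moment) is finite and equals l. *)
Definition fmom (p : nat -> R) (s : nat) (l : R) : Prop :=
  infinite_sum (fun k => INR (falling k s) * p k) l.

Fixpoint rising (r : R) (k : nat) : R :=
  match k with
  | O => 1
  | S k' => rising r k' * (r + INR k')
  end.

(* NB(r,p) pmf: binom(k+r-1, r-1) (1-p)^r p^k; for r = 0 this is the point mass at 0. *)
Definition nb_pmf (r p : R) (k : nat) : R :=
  rising r k / INR (fact k) * Rpower (1 - p) r * p ^ k.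

(* Convergence in distribution of N-valued laws: convergence of the
   distribution functions P(X_n <= k) at every k (the only points of
   possible discontinuity of the limit CDF are integers, and the CDF is
   constant on [k, k+1)). *)
Definition conv_distr (law : nat -> nat -> R) (q : nat -> R) : Prop :=
  forall k : nat, Un_cv (fun n => sum_f_R0 (law n) k) (sum_f_R0 q k).

From Stdlib Require Import Reals Lra Lia Psatz Factorial.
From Coquelicot Require Import Coquelicot.
Open Scope R_scope.

(* Everything goes through generating functions.  Writing
   Phi_n(z) = E z^(X_n), the branching recursion gives
   Phi_n(z) = Phi_(n-1)(G_n(z)) H_n(z), Phi_0 = 1, and the limit law has
   generating function psi(y) = (1 + nu y / 2)^(-2 lambda/nu) at z = 1 - y.

   1. Series with nonnegative terms (comparison, Tonelli), Bonferroni bounds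
      for (1 - y)^k and the resulting Taylor bounds of a generating function
      near 1 in terms of factorial moments.
   2. The recursion for law n identifies its generating function with the
      iterate law_pgf; a continuity theorem turns convergence of generating
      functions on [0,1) into convergence of every coefficient.
   3. The negative binomial series (1 - t)^(-r) (via its differential
      equation) shows that psi is the generating function of NB.
   4. One step: with T_n(y) = 1 - G_n(1 - y), the ratio
      H_n(1 - y) psi(T_n y) / psi(y) is exp(+-eps (1 - rho_n) y) for n large
      (conditions (ii)-(iv)).  Telescoping these steps from a fixed time K,
      the divergence of sum (1 - rho_n) (condition (i)) pushes the iterated
      point to 0, so Phi_n(1 - y) -> psi(y); step 2 concludes. *)

(** * Series with nonnegative terms *)

Lemma series_scal (c : R) (a : nat -> R) l :
  is_series a l -> is_series (fun n => c * a n) (c * l).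
Proof. exact (is_series_scal_l c a l). Qed.

Lemma series_plus (a b : nat -> R) la lb : is_series a la -> is_series b lb ->
  is_series (fun n => a n + b n) (la + lb).
Proof. exact (is_series_plus a b la lb). Qed.

Lemma series_minus (a b : nat -> R) la lb : is_series a la -> is_series b lb ->
  is_series (fun n => a n - b n) (la - lb).
Proof. exact (is_series_minus a b la lb). Qed.

Lemma cv_const (c : R) : Un_cv (fun _ => c) c.
Proof. intros e He; exists O; intros; unfold R_dist; rewrite Rminus_diag, Rabs_R0; auto. Qed.

Lemma series_ext (a b : nat -> R) l : (forall n, a n = b n) -> is_series a l -> is_series b l.
Proof. exact (is_series_ext a b l). Qed.

Lemma series_le (a b : nat -> R) la lb :
  (forall n, a n <= b n) -> is_series a la -> is_series b lb -> la <= lb.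
Proof.
  intros H Ha Hb. apply is_series_Reals in Ha, Hb.
  exact (Rle_cv_lim (fun N => sum_Rle a b N (fun n _ => H n)) Ha Hb).
Qed.

Lemma series_nonneg (a : nat -> R) l : (forall n, 0 <= a n) -> is_series a l -> 0 <= l.
Proof.
  intros H Ha. apply (series_le (fun _ => 0) a _ _ H); auto.
  pose proof (series_scal 0 a l Ha) as H0. rewrite Rmult_0_l in H0.
  eapply series_ext; [|exact H0]. intros; apply Rmult_0_l.
Qed.

Lemma partial_sum_le (a : nat -> R) l N :
  (forall n, 0 <= a n) -> is_series a l -> sum_f_R0 a N <= l.
Proof. intros H Ha. apply is_series_Reals in Ha. exact (sum_incr a N l Ha H). Qed.

Lemma term_le_sum (f : nat -> R) k N :
  (forall n, 0 <= f n) -> (k <= N)%nat -> f k <= sum_f_R0 f N.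
Proof.
  intros Hf Hk. induction N as [|N IH].
  - replace k with O by lia. simpl; lra.
  - destruct (Nat.eq_dec k (S N)) as [->|Hne]; simpl.
    + pose proof (cond_pos_sum f N Hf). lra.
    + specialize (IH ltac:(lia)). specialize (Hf (S N)). lra.
Qed.

Lemma term_le_series (a : nat -> R) l k : (forall n, 0 <= a n) -> is_series a l -> a k <= l.
Proof.
  intros H Ha. eapply Rle_trans; [apply (term_le_sum a k k H); lia|].
  apply partial_sum_le; auto.
Qed.

Lemma ex_series_dominated (a b : nat -> R) :
  (forall n, 0 <= a n <= b n) -> ex_series b -> ex_series a.
Proof.
  intros H Hb. apply (ex_series_le a b); auto.
  intros n. unfold norm; simpl; unfold abs; simpl. rewrite Rabs_pos_eq; apply H.
Qed.

Lemma series_of_bounded_partial_sums (a : nat -> R) M :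
  (forall n, 0 <= a n) -> (forall N, sum_f_R0 a N <= M) ->
  exists l, is_series a l /\ l <= M.
Proof.
  intros Hp Hb.
  destruct (growing_cv (fun n => sum_f_R0 a n)) as [l Hl].
  - intros n; simpl. specialize (Hp (S n)). lra.
  - exists M. intros x [n ->]. auto.
  - exists l. split; [apply is_series_Reals; exact Hl|].
    exact (Rle_cv_lim Hb Hl (cv_const M)).
Qed.

Lemma finite_sum_series (a : nat -> nat -> R) (b : nat -> R) K :
  (forall k, is_series (fun m => a m k) (b k)) ->
  is_series (fun m => sum_f_R0 (a m) K) (sum_f_R0 b K).
Proof. intros H. induction K; simpl; [apply H|apply series_plus; auto]. Qed.

Lemma tonelli (a : nat -> nat -> R) (b : nat -> R) S :
  (forall m k, 0 <= a m k) -> (forall m, is_series (a m) (b m)) -> is_series b S ->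
  exists c : nat -> R, (forall k, is_series (fun m => a m k) (c k)) /\ is_series c S.
Proof.
  intros Hp Hb HS.
  assert (Hc : forall k, is_series (fun m => a m k) (Series (fun m => a m k))).
  { intros k. apply Series_correct, (ex_series_dominated _ b); [|exists S; auto].
    intros m; split; auto. apply (term_le_series (a m)); auto. }
  exists (fun k => Series (fun m => a m k)). split; auto.
  assert (Hcp : forall k, 0 <= Series (fun m => a m k))
    by (intros; apply (series_nonneg _ _ (fun m => Hp m k) (Hc k))).
  destruct (series_of_bounded_partial_sums _ S Hcp) as [T [HT HTS]].
  - intros K. apply (series_le _ _ _ _ (fun m => partial_sum_le _ _ K (Hp m) (Hb m))
      (finite_sum_series a _ K Hc) HS).
  - replace S with T; auto. apply Rle_antisym; auto.
    apply is_series_Reals in HS.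
    refine (Rle_cv_lim _ HS (cv_const T)). intros M.
    apply (series_le _ _ _ _ (fun k => partial_sum_le (fun m => a m k) _ M (fun m => Hp m k) (Hc k))
      (finite_sum_series (fun k m => a m k) b M Hb) HT).
Qed.

(** * Truncated binomial expansions of (1 - y)^k *)

Lemma falling1 k : INR (falling k 1) = INR k.
Proof. assert (falling k 1 = k) as -> by (cbn [falling]; lia). reflexivity. Qed.

Lemma falling2 k : INR (falling k 2) = INR k * (INR k - 1).
Proof.
  destruct k as [|k]; [simpl; ring|].
  assert (falling (S k) 2 = S k * k)%nat as -> by (cbn [falling]; lia).
  rewrite mult_INR, S_INR; ring.
Qed.

Lemma falling3 k : INR (falling k 3) = INR k * (INR k - 1) * (INR k - 2).
Proof.
  destruct k as [|[|k]]; [simpl; ring|simpl; ring|].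
  assert (falling (S (S k)) 3 = S (S k) * S k * k)%nat as -> by (cbn [falling]; lia).
  rewrite !mult_INR, !S_INR; ring.
Qed.

Lemma pow_lower1 y k : 0 <= y <= 1 -> 1 - INR k * y <= (1 - y) ^ k.
Proof.
  intros Hy. induction k as [|k IH]; [simpl; lra|].
  rewrite S_INR; simpl pow. pose proof (pos_INR k). nra.
Qed.

Lemma pow_upper2 y k : 0 <= y <= 1 ->
  (1 - y) ^ k <= 1 - INR k * y + INR k * (INR k - 1) / 2 * y ^ 2.
Proof.
  intros Hy. induction k as [|k IH]; [simpl; lra|].
  assert (Hf : 0 <= INR k * (INR k - 1)) by (rewrite <- falling2; apply pos_INR).
  assert (0 <= INR k * (INR k - 1) * y ^ 3) by (apply Rmult_le_pos; [lra|apply pow_le; lra]).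
  assert ((1 - y) * (1 - y) ^ k <= (1 - y) * (1 - INR k * y + INR k * (INR k - 1) / 2 * y ^ 2))
    by (apply Rmult_le_compat_l; lra).
  rewrite S_INR; simpl pow in *. nra.
Qed.

Lemma pow_lower3 y k : 0 <= y <= 1 ->
  1 - INR k * y + INR k * (INR k - 1) / 2 * y ^ 2
    - INR k * (INR k - 1) * (INR k - 2) / 6 * y ^ 3 <= (1 - y) ^ k.
Proof.
  intros Hy. induction k as [|k IH]; [simpl; lra|].
  assert (Hf : 0 <= INR k * (INR k - 1) * (INR k - 2)) by (rewrite <- falling3; apply pos_INR).
  assert (0 <= INR k * (INR k - 1) * (INR k - 2) * y ^ 4)
    by (apply Rmult_le_pos; [lra|apply pow_le; lra]).
  assert ((1 - y) * (1 - INR k * y + INR k * (INR k - 1) / 2 * y ^ 2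
    - INR k * (INR k - 1) * (INR k - 2) / 6 * y ^ 3) <= (1 - y) * (1 - y) ^ k)
    by (apply Rmult_le_compat_l; lra).
  rewrite S_INR; simpl pow in *. nra.
Qed.

(** * Probability generating functions *)

Definition pgf (p : nat -> R) (z : R) : R := Series (fun k => p k * z ^ k).

Lemma pmf_series p : is_pmf p -> is_series p 1.
Proof. intros [_ H]. apply is_series_Reals, H. Qed.

Lemma pow_le1 (z : R) n : 0 <= z <= 1 -> z ^ n <= 1.
Proof. intros Hz. rewrite <- (pow1 n). apply pow_incr; lra. Qed.

Lemma pgf_series p z : is_pmf p -> 0 <= z <= 1 -> is_series (fun k => p k * z ^ k) (pgf p z).
Proof.
  intros Hp Hz. apply Series_correct, (ex_series_dominated _ p); [|exists 1; apply pmf_series, Hp].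
  intros n. destruct Hp as [H0 _]. pose proof (pow_le1 z n Hz). pose proof (pow_le z n (proj1 Hz)).
  specialize (H0 n). split; nra.
Qed.

Lemma pgf_range p z : is_pmf p -> 0 <= z <= 1 -> 0 <= pgf p z <= 1.
Proof.
  intros Hp Hz. pose proof (pgf_series p z Hp Hz) as HS.
  pose proof (pmf_series p Hp) as H1. destruct Hp as [H0 _]. split.
  - apply (series_nonneg _ _ (fun n => Rmult_le_pos _ _ (H0 n) (pow_le z n (proj1 Hz))) HS).
  - refine (series_le _ p _ _ _ HS H1).
    intros n. pose proof (pow_le1 z n Hz). pose proof (H0 n). nra.
Qed.

Lemma pgf_ge_termwise p z (c : nat -> R) S : is_pmf p -> 0 <= z <= 1 ->
  (forall k, c k <= z ^ k) -> is_series (fun k => p k * c k) S -> S <= pgf p z.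
Proof.
  intros Hp Hz Hc HS. apply (series_le _ _ _ _ (fun k => Rmult_le_compat_l _ _ _ (proj1 Hp k) (Hc k)) HS).
  apply pgf_series; auto.
Qed.

Lemma pgf_le_termwise p z (c : nat -> R) S : is_pmf p -> 0 <= z <= 1 ->
  (forall k, z ^ k <= c k) -> is_series (fun k => p k * c k) S -> pgf p z <= S.
Proof.
  intros Hp Hz Hc HS. apply (series_le _ _ _ _ (fun k => Rmult_le_compat_l _ _ _ (proj1 Hp k) (Hc k))); auto.
  apply pgf_series; auto.
Qed.

Section PgfBounds.
Variables (p : nat -> R) (y m1 m2 m3 : R).
Hypotheses (Hp : is_pmf p) (Hy : 0 <= y <= 1).

Lemma pgf_lower1 : fmom p 1 m1 -> 1 - m1 * y <= pgf p (1 - y).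
Proof.
  intros H1. apply is_series_Reals in H1.
  apply (pgf_ge_termwise p _ (fun k => 1 - INR k * y)); [auto|lra|intros; apply pow_lower1, Hy|].
  replace (1 - m1 * y) with (1 - y * m1) by ring.
  eapply series_ext; [|exact (series_minus _ _ _ _ (pmf_series p Hp) (series_scal y _ _ H1))].
  intros k; cbv beta. rewrite falling1; ring.
Qed.

Lemma pgf_upper2 : fmom p 1 m1 -> fmom p 2 m2 -> pgf p (1 - y) <= 1 - m1 * y + m2 / 2 * y ^ 2.
Proof.
  intros H1 H2. apply is_series_Reals in H1, H2.
  apply (pgf_le_termwise p _ (fun k => 1 - INR k * y + INR k * (INR k - 1) / 2 * y ^ 2));
    [auto|lra|intros; apply pow_upper2, Hy|].
  replace (1 - m1 * y + m2 / 2 * y ^ 2) with (1 - y * m1 + (y ^ 2 / 2) * m2) by field.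
  eapply series_ext; [|exact (series_plus _ _ _ _ (series_minus _ _ _ _ (pmf_series p Hp)
    (series_scal y _ _ H1)) (series_scal (y ^ 2 / 2) _ _ H2))].
  intros k; cbv beta. rewrite falling1, falling2; field.
Qed.

Lemma pgf_lower3 : fmom p 1 m1 -> fmom p 2 m2 -> fmom p 3 m3 ->
  1 - m1 * y + m2 / 2 * y ^ 2 - m3 / 6 * y ^ 3 <= pgf p (1 - y).
Proof.
  intros H1 H2 H3. apply is_series_Reals in H1, H2, H3.
  apply (pgf_ge_termwise p _ (fun k => 1 - INR k * y + INR k * (INR k - 1) / 2 * y ^ 2
    - INR k * (INR k - 1) * (INR k - 2) / 6 * y ^ 3)); [auto|lra|intros; apply pow_lower3, Hy|].
  replace (1 - m1 * y + m2 / 2 * y ^ 2 - m3 / 6 * y ^ 3)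
    with (1 - y * m1 + (y ^ 2 / 2) * m2 - (y ^ 3 / 6) * m3) by field.
  eapply series_ext; [|exact (series_minus _ _ _ _ (series_plus _ _ _ _
    (series_minus _ _ _ _ (pmf_series p Hp) (series_scal y _ _ H1)) (series_scal (y ^ 2 / 2) _ _ H2))
    (series_scal (y ^ 3 / 6) _ _ H3))].
  intros k; cbv beta. rewrite falling1, falling2, falling3; field.
Qed.

End PgfBounds.

(** * Convolutions and the generating function of X_n *)

Lemma conv_nonneg a b k : (forall n, 0 <= a n) -> (forall n, 0 <= b n) -> 0 <= conv a b k.
Proof. intros Ha Hb. apply cond_pos_sum. intros; apply Rmult_le_pos; auto. Qed.

Lemma conv_series a b z A B : (forall n, 0 <= a n) -> (forall n, 0 <= b n) -> 0 <= z ->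
  is_series (fun k => a k * z ^ k) A -> is_series (fun k => b k * z ^ k) B ->
  is_series (fun k => conv a b k * z ^ k) (A * B).
Proof.
  intros Ha Hb Hz HA HB.
  eapply series_ext; [|apply (is_series_mult_pos _ _ _ _ HA HB)].
  - intros k. unfold conv. rewrite Rmult_comm, scal_sum. apply sum_eq. intros i Hi.
    replace (z ^ k) with (z ^ i * z ^ (k - i)) by (rewrite <- pow_add; f_equal; lia). ring.
  - intros; apply Rmult_le_pos; auto; apply pow_le; auto.
  - intros; apply Rmult_le_pos; auto; apply pow_le; auto.
Qed.

Lemma delta0_nonneg k : 0 <= delta0 k.
Proof. unfold delta0; destruct (Nat.eqb k 0); lra. Qed.

Lemma delta0_series z : is_series (fun k => delta0 k * z ^ k) 1.
Proof.
  apply is_series_Reals. intros eps He. exists O. intros n _. unfold R_dist.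
  replace (sum_f_R0 (fun k => delta0 k * z ^ k) n) with 1; [rewrite Rminus_diag, Rabs_R0; auto|].
  induction n as [|n IH]; simpl; [unfold delta0; simpl; ring|]. rewrite <- IH. unfold delta0; simpl; ring.
Qed.

Lemma conv_pow_nonneg g m k : (forall n, 0 <= g n) -> 0 <= conv_pow g m k.
Proof.
  intros Hg. revert k. induction m; intros k; simpl; [apply delta0_nonneg|apply conv_nonneg; auto].
Qed.

Lemma conv_pow_series g z Gz m : (forall n, 0 <= g n) -> 0 <= z ->
  is_series (fun k => g k * z ^ k) Gz -> is_series (fun k => conv_pow g m k * z ^ k) (Gz ^ m).
Proof.
  intros Hg Hz HG. induction m; simpl; [apply delta0_series|].
  rewrite Rmult_comm. apply conv_series; auto. intros; apply conv_pow_nonneg; auto.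
Qed.

Lemma mixture_series (w : nat -> R) (c : nat -> nat -> R) (q C : nat -> R) z W :
  (forall m, 0 <= w m) -> (forall m k, 0 <= c m k) -> 0 <= z ->
  (forall k, is_series (fun m => w m * c m k) (q k)) ->
  (forall m, is_series (fun k => c m k * z ^ k) (C m)) ->
  is_series (fun m => w m * C m) W -> is_series (fun k => q k * z ^ k) W.
Proof.
  intros Hw Hc Hz Hq HC HW.
  destruct (tonelli (fun m k => w m * c m k * z ^ k) (fun m => w m * C m) W) as [d [Hd HdW]]; auto.
  - intros m k. apply Rmult_le_pos; [apply Rmult_le_pos; auto|apply pow_le; auto].
  - intros m. eapply series_ext; [|exact (series_scal (w m) _ _ (HC m))]. intros k; cbv beta; ring.
  - eapply series_ext; [|exact HdW]. intros k.
    rewrite <- (is_series_unique _ _ (Hd k)), Rmult_comm. apply is_series_unique.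
    eapply series_ext; [|exact (series_scal (z ^ k) _ _ (Hq k))]. intros m; cbv beta; ring.
Qed.

(* Phi_n(z) = E z^(X_n), computed by the recursion
   Phi_0 = 1 and Phi_n(z) = Phi_(n-1)(G_n(z)) H_n(z). *)
Fixpoint law_pgf (g h : nat -> nat -> R) (n : nat) (z : R) : R :=
  match n with
  | O => 1
  | S n' => law_pgf g h n' (pgf (g (S n')) z) * pgf (h (S n')) z
  end.

Section BranchingLaw.
Variables (g h law : nat -> nat -> R).
Hypotheses
  (Hg : forall n, (1 <= n)%nat -> is_pmf (g n))
  (Hh : forall n, (1 <= n)%nat -> is_pmf (h n))
  (Hlaw0 : forall k, law O k = delta0 k)
  (HlawS : forall n k, (1 <= n)%nat ->
     infinite_sum (fun m => law (n - 1)%nat m * conv (conv_pow (g n) m) (h n) k) (law n k)).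

Lemma law_pgf_range n z : 0 <= z <= 1 -> 0 <= law_pgf g h n z <= 1.
Proof.
  revert z. induction n as [|n IH]; intros z Hz; simpl; [lra|].
  pose proof (pgf_range (g (S n)) z (Hg (S n) ltac:(lia)) Hz) as HG.
  pose proof (pgf_range (h (S n)) z (Hh (S n) ltac:(lia)) Hz).
  specialize (IH _ HG). nra.
Qed.

Lemma law_step n k :
  is_series (fun m => law n m * conv (conv_pow (g (S n)) m) (h (S n)) k) (law (S n) k).
Proof.
  apply is_series_Reals. specialize (HlawS (S n) k ltac:(lia)).
  replace (S n - 1)%nat with n in HlawS by lia. exact HlawS.
Qed.

Lemma law_nonneg n k : 0 <= law n k.
Proof.
  revert k. induction n as [|n IH]; intros k; [rewrite Hlaw0; apply delta0_nonneg|].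
  refine (series_nonneg _ _ _ (law_step n k)). intros m. apply Rmult_le_pos; auto.
  apply conv_nonneg; [intros; apply conv_pow_nonneg, (Hg (S n) ltac:(lia))|apply (Hh (S n) ltac:(lia))].
Qed.

Lemma law_pgf_series n z : 0 <= z <= 1 -> is_series (fun k => law n k * z ^ k) (law_pgf g h n z).
Proof.
  revert z. induction n as [|n IH]; intros z Hz.
  - eapply series_ext; [|apply (delta0_series z)]. intros k; cbv beta. rewrite Hlaw0; reflexivity.
  - pose proof (Hg (S n) ltac:(lia)) as HgS. pose proof (Hh (S n) ltac:(lia)) as HhS.
    set (G := pgf (g (S n)) z). set (H := pgf (h (S n)) z).
    apply (mixture_series (law n) (fun m => conv (conv_pow (g (S n)) m) (h (S n))) _
      (fun m => G ^ m * H)); auto using law_nonneg, law_step; try lra.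
    + intros m k. apply conv_nonneg; [intros; apply conv_pow_nonneg, HgS|apply HhS].
    + intros m. apply conv_series; [intros; apply conv_pow_nonneg, HgS|apply HhS|lra| |].
      * apply conv_pow_series; [apply HgS|lra|apply pgf_series; auto].
      * apply pgf_series; auto.
    + simpl. rewrite Rmult_comm.
      eapply series_ext; [|exact (series_scal H _ _ (IH G (pgf_range _ _ HgS Hz)))].
      intros m; cbv beta; ring.
Qed.

Lemma law_le1 n k : law n k <= 1.
Proof.
  pose proof (law_pgf_series n 1 ltac:(lra)) as HS.
  pose proof (term_le_series _ _ k (fun j => Rmult_le_pos _ _ (law_nonneg n j) (pow_le 1 j Rle_0_1)) HS)
    as Hk; cbv beta in Hk.
  pose proof (law_pgf_range n 1 ltac:(lra)). rewrite pow1, Rmult_1_r in Hk. lra.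
Qed.

End BranchingLaw.

(** * Continuity theorem for generating functions *)

Lemma tail_bound (a : nat -> R) (x A : R) k : (forall j, 0 <= a j <= 1) -> 0 <= x < 1 ->
  is_series (fun j => a j * x ^ j) A ->
  0 <= A - sum_f_R0 (fun j => a j * x ^ j) k <= x ^ (S k) / (1 - x).
Proof.
  intros Ha Hx HA.
  assert (HT : is_series (fun j => a (S k + j)%nat * x ^ (S k + j))
                 (A - sum_f_R0 (fun j => a j * x ^ j) k)).
  { apply (is_series_incr_n (fun j => a j * x ^ j) (S k)); [lia|].
    simpl pred. rewrite sum_n_Reals.
    assert (E : forall u v : R, plus (u - v) v = u)
      by (intros u v; unfold plus; simpl; change (Rplus (u - v) v = u); ring).
    rewrite E. exact HA. }
  split.
  - apply (series_nonneg _ _ (fun j => Rmult_le_pos _ _ (proj1 (Ha _)) (pow_le x _ (proj1 Hx))) HT).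
  - refine (series_le _ _ _ _ _ HT (series_scal (x ^ S k) _ _ (is_series_geom x _)));
      [|rewrite Rabs_pos_eq; lra].
    intros j. rewrite pow_add. pose proof (pow_le x (S k) (proj1 Hx)). pose proof (pow_le x j (proj1 Hx)).
    destruct (Ha (S k + j)%nat). assert (0 <= x ^ S k * x ^ j) by (apply Rmult_le_pos; auto). nra.
Qed.

Lemma partial_diff_bound (a b : nat -> R) (x A B : R) k :
  (forall j, 0 <= a j <= 1) -> (forall j, 0 <= b j <= 1) -> 0 <= x < 1 ->
  is_series (fun j => a j * x ^ j) A -> is_series (fun j => b j * x ^ j) B ->
  Rabs (sum_f_R0 (fun j => (a j - b j) * x ^ j) k) <= Rabs (A - B) + x ^ (S k) / (1 - x).
Proof.
  intros Ha Hb Hx HA HB.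
  pose proof (tail_bound a x A k Ha Hx HA). pose proof (tail_bound b x B k Hb Hx HB).
  assert (Hsplit : sum_f_R0 (fun j => (a j - b j) * x ^ j) k
    = sum_f_R0 (fun j => a j * x ^ j) k - sum_f_R0 (fun j => b j * x ^ j) k).
  { rewrite <- minus_sum. apply sum_eq. intros; ring. }
  rewrite Hsplit.
  replace (sum_f_R0 (fun j => a j * x ^ j) k - sum_f_R0 (fun j => b j * x ^ j) k)
    with ((A - B) - ((A - sum_f_R0 (fun j => a j * x ^ j) k) - (B - sum_f_R0 (fun j => b j * x ^ j) k)))
    by ring.
  eapply Rle_trans; [apply Rabs_triang|]. rewrite Rabs_Ropp. apply Rplus_le_compat_l.
  apply Rabs_le. lra.
Qed.

Lemma lower_sum_cv0 (f : nat -> nat -> R) k :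
  (forall j, (j < k)%nat -> Un_cv (fun n => f n j) 0) ->
  Un_cv (fun n => sum_f_R0 (f n) k - f n k) 0.
Proof.
  destruct k as [|k]; intros H.
  - intros e He; exists O; intros n _. simpl. unfold R_dist. rewrite !Rminus_diag, Rabs_R0; auto.
  - assert (Hk : Un_cv (fun n => sum_f_R0 (f n) k) 0).
    { induction k as [|k IH]; simpl; [apply H; lia|].
      replace 0 with (0 + 0) by ring. apply CV_plus; [apply IH|apply H]; intros; try apply H; lia. }
    intros e He. destruct (Hk e He) as [N HN]. exists N. intros n Hn.
    simpl sum_f_R0. replace (sum_f_R0 (f n) k + f n (S k) - f n (S k)) with (sum_f_R0 (f n) k) by ring.
    auto.
Qed.

(* Continuity theorem: pointwise convergence of generating functions on
   [0,1) implies convergence of every coefficient.  By strong induction on k: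
   |p_n k - q k| x^k is bounded by the gap of the generating functions at x,
   the (vanishing) contribution of the earlier coefficients and the tails
   x^(k+1)/(1-x), which is small against x^k once x is small. *)
Theorem pgf_continuity (p : nat -> nat -> R) (q : nat -> R) (P : nat -> R -> R) (Q : R -> R) :
  (forall n k, 0 <= p n k <= 1) -> (forall k, 0 <= q k <= 1) ->
  (forall n x, 0 <= x < 1 -> is_series (fun k => p n k * x ^ k) (P n x)) ->
  (forall x, 0 <= x < 1 -> is_series (fun k => q k * x ^ k) (Q x)) ->
  (forall x, 0 <= x < 1 -> Un_cv (fun n => P n x) (Q x)) ->
  forall k, Un_cv (fun n => p n k) (q k).
Proof.
  intros Hp Hq HP HQ Hcv k. induction k as [k IH] using (well_founded_induction Wf_nat.lt_wf).
  intros eps He.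
  set (x := Rmin (1/2) (eps/4)).
  assert (Hx : 0 < x <= 1/2) by (split; [apply Rmin_glb_lt|apply Rmin_l]; lra).
  assert (Hx2 : x <= eps / 4) by apply Rmin_r.
  set (f := fun n j => (p n j - q j) * x ^ j).
  assert (Hxk : 0 < x ^ k) by (apply pow_lt; lra).
  assert (He' : 0 < x ^ k * (eps / 4)) by (apply Rmult_lt_0_compat; lra).
  destruct (Hcv x ltac:(lra) _ He') as [N1 HN1].
  assert (Hearlier : forall j, (j < k)%nat -> Un_cv (fun n => f n j) 0).
  { intros j Hj. unfold f. replace 0 with ((q j - q j) * x ^ j) by ring.
    apply CV_mult; [apply CV_minus; [apply IH, Hj|]|]; apply cv_const. }
  destruct (lower_sum_cv0 f k Hearlier _ He') as [N2 HN2].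
  exists (Nat.max N1 N2). intros n Hn.
  specialize (HN1 n ltac:(lia)). specialize (HN2 n ltac:(lia)). unfold R_dist in *.
  rewrite Rminus_0_r in HN2.
  pose proof (partial_diff_bound (p n) q x (P n x) (Q x) k (Hp n) Hq ltac:(lra) (HP n x ltac:(lra))
    (HQ x ltac:(lra))) as HD.
  assert (T : x ^ S k / (1 - x) <= x ^ k * (eps / 2)).
  { apply Rle_div_l; [lra|]. simpl. assert (x <= eps / 2 * (1 - x)) by nra. nra. }
  assert (Habs : Rabs (p n k - q k) * x ^ k <= Rabs (sum_f_R0 (f n) k) + Rabs (sum_f_R0 (f n) k - f n k)).
  { rewrite <- (Rabs_pos_eq (x ^ k)) by lra. rewrite <- Rabs_mult.
    replace ((p n k - q k) * x ^ k) with (sum_f_R0 (f n) k - (sum_f_R0 (f n) k - f n k)) by (unfold f; ring).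
    eapply Rle_trans; [apply Rabs_triang|]. rewrite Rabs_Ropp; lra. }
  apply (Rmult_lt_reg_r (x ^ k)); auto. unfold f in *. lra.
Qed.

(** * The negative binomial generating function *)

(* Coefficients binom(k+r-1, k) of the negative binomial series (1-t)^(-r). *)
Definition nb_coef (r : R) (k : nat) : R := rising r k / INR (fact k).

Lemma nb_coef_0 r : nb_coef r 0 = 1.
Proof. unfold nb_coef; simpl. field. Qed.

Lemma nb_coef_S r k : nb_coef r (S k) = nb_coef r k * ((r + INR k) / INR (S k)).
Proof.
  unfold nb_coef. simpl rising. rewrite fact_simpl, mult_INR.
  pose proof (INR_fact_neq_0 k). pose proof (pos_INR k). rewrite S_INR. field; lra.
Qed.

Lemma nb_coef_nonneg r k : 0 <= r -> 0 <= nb_coef r k.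
Proof.
  intros Hr. induction k as [|k IH]; [rewrite nb_coef_0; lra|].
  rewrite nb_coef_S. pose proof (pos_INR k). apply Rmult_le_pos; auto.
  apply Rle_div_r; [rewrite S_INR; lra|]. lra.
Qed.

Lemma nat_unbounded (A : R) : exists n : nat, A < INR n.
Proof.
  destruct (archimed (Rabs A)) as [H1 _].
  assert (Hz : (0 <= up (Rabs A))%Z) by (apply le_IZR; pose proof (Rabs_pos A); simpl; lra).
  exists (Z.to_nat (up (Rabs A))). rewrite INR_IZR_INZ, Znat.Z2Nat.id by auto.
  pose proof (Rle_abs A). lra.
Qed.

(* For 0 <= s < 1 the terms nb_coef r k s^k eventually decrease, hence are
   bounded: the negative binomial series has radius of convergence >= 1. *)
Lemma nb_coef_geom_bounded r s : 0 <= r -> 0 <= s < 1 ->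
  exists M, forall n, Rabs (nb_coef r n * s ^ n) <= M.
Proof.
  intros Hr Hs. set (d := fun n => nb_coef r n * s ^ n).
  assert (Hd : forall n, 0 <= d n)
    by (intros; apply Rmult_le_pos; [apply nb_coef_nonneg; auto|apply pow_le; lra]).
  destruct (nat_unbounded (s * r / (1 - s))) as [K0 HK0].
  assert (Hdec : forall k, (K0 <= k)%nat -> d (S k) <= d k).
  { intros k Hk. unfold d. rewrite nb_coef_S. simpl pow.
    assert (HK : INR K0 <= INR k) by (apply le_INR; auto).
    assert (Hq : s * ((r + INR k) / INR (S k)) <= 1).
    { assert (Hsr : s * r <= INR k * (1 - s)).
      { replace (s * r) with (s * r / (1 - s) * (1 - s)) by (field; lra).
        apply Rmult_le_compat_r; lra. }
      pose proof (pos_INR k). rewrite S_INR.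
      replace (s * ((r + INR k) / (INR k + 1))) with ((s * r + s * INR k) / (INR k + 1)) by (field; lra).
      apply Rle_div_l; lra. }
    assert (0 <= nb_coef r k * s ^ k) by apply Hd. nra. }
  assert (Htail : forall j, d (K0 + j)%nat <= d K0).
  { induction j; [rewrite Nat.add_0_r; lra|].
    replace (K0 + S j)%nat with (S (K0 + j)) by lia. eapply Rle_trans; [apply Hdec; lia|auto]. }
  exists (sum_f_R0 d K0). intros n. rewrite Rabs_pos_eq by apply Hd. fold (d n).
  destruct (Compare_dec.le_lt_dec n K0); [apply term_le_sum; auto|].
  replace n with (K0 + (n - K0))%nat by lia.
  eapply Rle_trans; [apply Htail|apply term_le_sum; auto].
Qed.

Lemma nb_coef_radius r t : 0 <= r -> Rabs t < 1 -> Rbar_lt (Rabs t) (CV_radius (nb_coef r)).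
Proof.
  intros Hr Ht. set (s := (Rabs t + 1) / 2).
  assert (Hs : 0 <= s < 1) by (unfold s; pose proof (Rabs_pos t); lra).
  apply (Rbar_lt_le_trans _ s); [simpl; unfold s; lra|].
  apply (proj1 (CV_radius_bounded (nb_coef r))), nb_coef_geom_bounded; auto.
Qed.

Lemma pseries_series a x l : is_pseries a x l -> is_series (fun k => a k * x ^ k) l.
Proof.
  intros H. eapply series_ext; [|apply H].
  intros k. rewrite pow_n_pow. change (x ^ k * a k = a k * x ^ k). ring.
Qed.

Lemma derive_zero_const (f : R -> R) t :
  (forall u, -1 < u < 1 -> is_derive f u 0) -> -1 < t < 1 -> f t = f 0.
Proof.
  intros Hd Ht.
  assert (Hin : forall x, Rmin 0 t <= x <= Rmax 0 t -> -1 < x < 1).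
  { intros x Hx. split; [apply Rlt_le_trans with (Rmin 0 t)|apply Rle_lt_trans with (Rmax 0 t)];
      try lra; [apply Rmin_glb_lt|apply Rmax_lub_lt]; lra. }
  destruct (MVT_gen f 0 t (fun _ => 0)) as [c [_ Hc]].
  - intros x Hx. apply Hd, Hin. lra.
  - intros x Hx. apply continuity_pt_filterlim, (ex_derive_continuous f). exists 0. apply Hd, Hin, Hx.
  - lra.
Qed.

Lemma nb_series_ode r u : 0 <= r -> -1 < u < 1 ->
  (1 - u) * PSeries (PS_derive (nb_coef r)) u = r * PSeries (nb_coef r) u.
Proof.
  intros Hr Hu. set (f := PSeries (nb_coef r) u). set (f' := PSeries (PS_derive (nb_coef r)) u).
  assert (Hrad : Rbar_lt (Rabs u) (CV_radius (nb_coef r)))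
    by (apply nb_coef_radius; auto; apply Rabs_def1; lra).
  assert (Hf : is_series (fun k => nb_coef r k * u ^ k) f)
    by (apply pseries_series, PSeries_correct, CV_radius_inside, Hrad).
  assert (Hf' : is_series (fun k => PS_derive (nb_coef r) k * u ^ k) f').
  { apply pseries_series, PSeries_correct, CV_radius_inside. rewrite CV_radius_derive. exact Hrad. }
  assert (A : is_series (fun k => (r + INR k) * nb_coef r k * u ^ k) f').
  { eapply series_ext; [|exact Hf']. intros k. unfold PS_derive. rewrite nb_coef_S.
    rewrite S_INR; pose proof (pos_INR k). field. lra. }
  assert (B : is_series (fun k => INR k * nb_coef r k * u ^ k) (u * f')).
  { apply (is_series_decr_1 (fun k => INR k * nb_coef r k * u ^ k)).
    assert (E : forall v : R, plus v (opp (INR 0 * nb_coef r 0 * u ^ 0)) = v)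
      by (intros v; unfold plus, opp; simpl; change (Rplus v (Ropp (0 * nb_coef r 0 * 1)) = v); ring).
    rewrite E. eapply series_ext; [|apply (series_scal u _ _ Hf')].
    intros k. unfold PS_derive. simpl pow. ring. }
  assert (C : is_series (fun k => (r + INR k) * nb_coef r k * u ^ k) (r * f + u * f')).
  { eapply series_ext; [|apply (series_plus _ _ _ _ (series_scal r _ _ Hf) B)]. intros; simpl; ring. }
  apply is_series_unique in A, C. rewrite A in C. nra.
Qed.

Lemma nb_binomial_series r t : 0 <= r -> -1 < t < 1 ->
  is_series (fun k => nb_coef r k * t ^ k) (exp (- r * ln (1 - t))).
Proof.
  intros Hr Ht. set (f := PSeries (nb_coef r)).
  set (F := fun u => exp (r * ln (1 - u)) * f u).
  assert (HF : forall u, -1 < u < 1 -> is_derive F u 0).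
  { intros u Hu.
    assert (He : is_derive (fun u => exp (r * ln (1 - u))) u (exp (r * ln (1 - u)) * (r * (- / (1 - u)))))
      by (auto_derive; [lra|replace (1 + - u) with (1 - u) by ring; field; lra]).
    pose proof (is_derive_mult _ f u _ _ He (is_derive_PSeries _ u
      (nb_coef_radius r u Hr ltac:(apply Rabs_def1; lra))) (fun a b => Rmult_comm a b)) as HM.
    unfold F. eapply is_derive_ext; [intros; reflexivity|].
    replace 0 with (plus (mult (exp (r * ln (1 - u)) * (r * - / (1 - u))) (f u))
      (mult (exp (r * ln (1 - u))) (PSeries (PS_derive (nb_coef r)) u))); [exact HM|].
    unfold plus, mult; simpl. pose proof (nb_series_ode r u Hr Hu). unfold f.
    replace (PSeries (PS_derive (nb_coef r)) u) with (r * PSeries (nb_coef r) u / (1 - u))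
      by (field_simplify_eq; lra).
    field. lra. }
  pose proof (derive_zero_const F t HF Ht) as Hconst.
  unfold F, f in Hconst. rewrite PSeries_0, nb_coef_0, Rminus_0_r, ln_1, Rmult_0_r, exp_0 in Hconst.
  replace (exp (- r * ln (1 - t))) with (PSeries (nb_coef r) t).
  - apply pseries_series, PSeries_correct, CV_radius_inside, nb_coef_radius; auto. apply Rabs_def1; lra.
  - replace (- r * ln (1 - t)) with (- (r * ln (1 - t))) by ring. rewrite exp_Ropp.
    pose proof (exp_pos (r * ln (1 - t))). field_simplify_eq; lra.
Qed.

Lemma exp_le_compat x y : x <= y -> exp x <= exp y.
Proof. intros H. destruct (Req_dec x y) as [->|]; [lra|apply Rlt_le, exp_increasing; lra]. Qed.

Lemma ln_le_sub1 x : 0 < x -> ln x <= x - 1.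
Proof.
  intros Hx. destruct (Rle_or_lt (ln x) (x - 1)) as [H|H]; auto.
  apply exp_increasing in H. rewrite exp_ln in H by auto. pose proof (exp_ineq1_le (x - 1)). lra.
Qed.

(* psi(y) = E (1-y)^X for X ~ NB(2 lam/nu, nu/(2+nu)), namely
   (1 + nu y / 2)^(-2 lam / nu). *)
Definition nb_psi (nu lam y : R) : R := exp (- (2 * lam / nu) * ln (1 + nu * y / 2)).

Lemma nb_psi_pos nu lam y : 0 < nb_psi nu lam y.
Proof. apply exp_pos. Qed.

Section NbPsiBounds.
Variables (nu lam y : R).
Hypotheses (Hnu : 0 < nu) (Hlam : 0 <= lam) (Hy : 0 <= y).

Lemma nb_shape_nonneg : 0 <= 2 * lam / nu.
Proof. apply Rmult_le_pos; [lra|apply Rlt_le, Rinv_0_lt_compat; lra]. Qed.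

Lemma nb_psi_le1 : nb_psi nu lam y <= 1.
Proof.
  assert (0 <= ln (1 + nu * y / 2)) by (rewrite <- ln_1; apply ln_le; nra).
  rewrite <- exp_0. apply exp_le_compat. pose proof (Rmult_le_pos _ _ nb_shape_nonneg H). lra.
Qed.

Lemma nb_psi_lower : 1 - lam * y <= nb_psi nu lam y.
Proof.
  eapply Rle_trans; [|apply exp_ineq1_le].
  assert (ln (1 + nu * y / 2) <= nu * y / 2) by (pose proof (ln_le_sub1 (1 + nu * y / 2)); nra).
  assert (2 * lam / nu * ln (1 + nu * y / 2) <= 2 * lam / nu * (nu * y / 2))
    by (apply Rmult_le_compat_l; [apply nb_shape_nonneg|auto]).
  replace (2 * lam / nu * (nu * y / 2)) with (lam * y) in * by (field; lra). lra.
Qed.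

End NbPsiBounds.

Lemma nb_pmf_series nu lam x : 0 < nu -> 0 <= lam -> 0 <= x <= 1 ->
  is_series (fun k => nb_pmf (2 * lam / nu) (nu / (2 + nu)) k * x ^ k) (nb_psi nu lam (1 - x)).
Proof.
  intros Hnu Hl Hx. set (r := 2 * lam / nu). set (p := nu / (2 + nu)).
  assert (Hr : 0 <= r) by (apply nb_shape_nonneg; lra).
  assert (Hp : 0 < p < 1) by (unfold p; split; [apply Rdiv_lt_0_compat|apply Rlt_div_l]; lra).
  pose proof (series_scal (Rpower (1 - p) r) _ _ (nb_binomial_series r (p * x) Hr ltac:(nra))) as B.
  replace (nb_psi nu lam (1 - x)) with (Rpower (1 - p) r * exp (- r * ln (1 - p * x))).
  - eapply series_ext; [|exact B]. intros k. unfold nb_pmf, nb_coef. rewrite Rpow_mult_distr. ring.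
  - unfold Rpower, nb_psi. rewrite <- exp_plus. f_equal.
    replace (1 - p * x) with ((1 - p) * (1 + nu * (1 - x) / 2)) by (unfold p; field; lra).
    rewrite ln_mult by nra. unfold r. ring.
Qed.

Lemma nb_pmf_range nu lam k : 0 < nu -> 0 <= lam ->
  0 <= nb_pmf (2 * lam / nu) (nu / (2 + nu)) k <= 1.
Proof.
  intros Hnu Hl.
  assert (Hnn : forall j, 0 <= nb_pmf (2 * lam / nu) (nu / (2 + nu)) j).
  { intros j. unfold nb_pmf. apply Rmult_le_pos; [apply Rmult_le_pos|].
    - apply (nb_coef_nonneg (2 * lam / nu) j), nb_shape_nonneg; lra.
    - apply Rlt_le, exp_pos.
    - apply pow_le, Rlt_le, Rdiv_lt_0_compat; lra. }
  split; auto.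
  pose proof (term_le_series _ _ k (fun j => Rmult_le_pos _ _ (Hnn j) (pow_le 1 j Rle_0_1))
    (nb_pmf_series nu lam 1 Hnu Hl ltac:(lra))) as Hk; cbv beta in Hk.
  rewrite pow1, Rmult_1_r in Hk. pose proof (nb_psi_le1 nu lam (1 - 1) Hnu Hl ltac:(lra)). lra.
Qed.

(** * The one-step estimate *)

Lemma neg_ln1m_bounds w : 0 <= w < 1 -> w <= - ln (1 - w) <= w + w ^ 2 / (1 - w).
Proof.
  intros Hw. split.
  - pose proof (ln_le_sub1 (1 - w) ltac:(lra)). lra.
  - rewrite <- ln_Rinv by lra. eapply Rle_trans; [apply ln_le_sub1, Rinv_0_lt_compat; lra|].
    apply Req_le. field. lra.
Qed.

(* One step of the iteration, in the scale A = (1 - rho_n) y, with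
   a = 1 - rho_n, be = G''/a, ga = G'''/a, mu = m1/a, et = m2/a, d = y - T_n(y)
   and H = H_n(1 - y): the Taylor bounds on G_n and H_n show that
   ln H + lam (L(y) - L(y - d)), with L(t) = (2/nu) ln(1 + nu t/2) (so that
   lam L = - ln psi), is A times a quantity that vanishes in the limit. *)
Section OneStep.
Variables (nu lam a be ga mu et y d H : R).
Hypotheses (Hnu : 0 < nu) (Hlam : 0 <= lam) (Ha : 0 < a <= 1) (Hbe : 0 <= be) (Hga : 0 <= ga)
  (Hmu : 0 <= mu) (Het : 0 <= et) (Hy : 0 <= y <= 1) (Hd : 0 <= d <= y)
  (Hd_lo : a * y + be * a / 2 * y ^ 2 - ga * a / 6 * y ^ 3 <= d)
  (Hd_hi : d <= a * y + be * a / 2 * y ^ 2)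
  (HH_lo : 1 - mu * a * y <= H) (HH_hi : H <= 1 - mu * a * y + et * a / 2 * y ^ 2)
  (HH1 : H <= 1) (Hmua : mu * a <= 1 / 2).

Let A := a * y.
Let q := 1 + nu * y / 2.
Let w := nu * d / 2 / q.
Let e1 := Rabs (be - nu) / 2 + ga / 6.
Let C1 := nu / 2 * (1 + be / 2) ^ 2 * (1 + nu / 2).

Lemma scale_range : 0 <= A <= a.
Proof. unfold A; split; nra. Qed.

Lemma q_range : 1 <= q <= 1 + nu / 2.
Proof. unfold q; split; nra. Qed.

Lemma increment_first_order : A - A * e1 <= d / q <= A + A * e1.
Proof.
  pose proof scale_range. pose proof q_range.
  set (r := A * (y * (be - nu) / 2) - (d - A * q)).
  assert (Hr : 0 <= r <= A * (ga / 6)).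
  { unfold r, A, q. assert (ga * a * y ^ 3 <= ga * a * y) by (simpl; apply Rmult_le_compat_l; nra).
    simpl in *. nra. }
  assert (Hlin : Rabs (y * (be - nu)) <= Rabs (be - nu)).
  { rewrite Rabs_mult, Rabs_pos_eq by lra. pose proof (Rabs_pos (be - nu)). nra. }
  assert (Hgap : Rabs (d - A * q) <= A * e1).
  { replace (d - A * q) with (A * (y * (be - nu)) / 2 - r) by (unfold r; field).
    eapply Rle_trans; [apply Rabs_triang|]. rewrite Rabs_Ropp, (Rabs_pos_eq r) by lra.
    assert (Habs : Rabs (A * (y * (be - nu)) / 2) = A * Rabs (y * (be - nu)) / 2).
    { unfold Rdiv. rewrite !Rabs_mult, (Rabs_pos_eq A), (Rabs_pos_eq (/ 2)) by lra. reflexivity. }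
    rewrite Habs. unfold e1. nra. }
  replace (d / q) with (A + (d - A * q) / q) by (field; lra).
  assert (Hrel : Rabs ((d - A * q) / q) <= A * e1).
  { unfold Rdiv. rewrite Rabs_mult, Rabs_inv, (Rabs_pos_eq q) by lra.
    apply Rle_div_l; [lra|]. assert (0 <= A * e1) by (unfold e1; pose proof (Rabs_pos (be - nu)); nra). nra. }
  apply Rabs_le_between in Hrel. lra.
Qed.

Lemma w_range : 0 <= w <= 1 - 1 / (1 + nu / 2) /\ w <= nu / 2 * A * (1 + be / 2).
Proof.
  pose proof scale_range. pose proof q_range.
  unfold w. assert (0 <= nu * d / 2) by nra. split; [split|].
  - apply Rmult_le_pos; [lra|apply Rlt_le, Rinv_0_lt_compat; lra].
  - replace (1 - 1 / (1 + nu / 2)) with (nu / 2 / (1 + nu / 2)) by (field; lra).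
    apply Rle_div_l; [lra|].
    replace (nu / 2 / (1 + nu / 2) * q) with (nu * q / (2 + nu)) by (field; lra).
    apply (Rmult_le_reg_r (2 + nu)); [lra|].
    replace (nu * q / (2 + nu) * (2 + nu)) with (nu * q) by (field; lra). unfold q. nra.
  - apply Rle_div_l; [lra|]. unfold A in *.
    assert (d <= a * y * (1 + be / 2)).
    { assert (be * a * y ^ 2 <= be * a * y) by (apply Rmult_le_compat_l; simpl; nra). lra. }
    assert (0 <= nu / 2 * (a * y) * (1 + be / 2)) by (apply Rmult_le_pos; nra). nra.
Qed.

Lemma increment_second_order : 2 / nu * (w ^ 2 / (1 - w)) <= A * (C1 * a).
Proof.
  pose proof scale_range. destruct w_range as [[Hw0 Hw1] HwA].
  assert (Hpos : 0 < 1 / (1 + nu / 2)) by (apply Rdiv_lt_0_compat; lra).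
  assert (Hinv : 1 / (1 - w) <= 1 + nu / 2).
  { apply Rle_div_l; [lra|].
    replace 1 with ((1 + nu / 2) * (1 / (1 + nu / 2))) at 1 by (field; lra). nra. }
  assert (W2 : w ^ 2 <= (nu / 2 * A * (1 + be / 2)) * (nu / 2 * a * (1 + be / 2))).
  { simpl. rewrite Rmult_1_r. apply Rmult_le_compat; try lra.
    eapply Rle_trans; [exact HwA|]. apply Rmult_le_compat_r; nra. }
  replace (w ^ 2 / (1 - w)) with (w ^ 2 * (1 / (1 - w))) by (field; lra).
  assert (w ^ 2 * (1 / (1 - w)) <= (nu / 2 * A * (1 + be / 2)) * (nu / 2 * a * (1 + be / 2)) * (1 + nu / 2))
    by (apply Rmult_le_compat; try lra; [apply pow2_ge_0|apply Rlt_le, Rdiv_lt_0_compat; lra]).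
  apply Rle_trans with (2 / nu * ((nu / 2 * A * (1 + be / 2)) * (nu / 2 * a * (1 + be / 2)) * (1 + nu / 2))).
  - apply Rmult_le_compat_l; [apply Rlt_le, Rdiv_lt_0_compat|]; lra.
  - apply Req_le. unfold C1. field. lra.
Qed.

Lemma psi_increment_bounds :
  A - A * e1 <= 2 / nu * (ln (1 + nu * y / 2) - ln (1 + nu * (y - d) / 2)) <= A + A * e1 + A * (C1 * a).
Proof.
  pose proof q_range. destruct w_range as [[Hw0 Hw1] _].
  assert (Hw1' : w < 1) by (assert (0 < 1 / (1 + nu / 2)) by (apply Rdiv_lt_0_compat; lra); lra).
  assert (Hsplit : 1 + nu * (y - d) / 2 = q * (1 - w)).
  { unfold w, q. field. nra. }
  replace (ln (1 + nu * y / 2) - ln (1 + nu * (y - d) / 2)) with (- ln (1 - w))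
    by (rewrite Hsplit, ln_mult by lra; unfold q; ring).
  assert (Hwq : 2 / nu * w = d / q) by (unfold w; field; lra).
  pose proof increment_first_order. pose proof increment_second_order.
  destruct (neg_ln1m_bounds w (conj Hw0 Hw1')) as [L1 L2].
  assert (Hpos : 0 < 2 / nu) by (apply Rdiv_lt_0_compat; lra).
  split.
  - apply Rle_trans with (d / q); [lra|]. rewrite <- Hwq. apply Rmult_le_compat_l; lra.
  - apply Rle_trans with (2 / nu * (w + w ^ 2 / (1 - w))); [apply Rmult_le_compat_l; lra|]. lra.
Qed.

Lemma ln_H_bounds : - (mu * A) - 2 * mu ^ 2 * a * A <= ln H <= - (mu * A) + et * A / 2.
Proof.
  pose proof scale_range. set (u := 1 - H).
  assert (Hy2 : y ^ 2 <= y) by (simpl; nra).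
  assert (HuA : mu * A - et * A / 2 <= u <= mu * A).
  { unfold u, A. assert (et * a * y ^ 2 <= et * a * y) by (apply Rmult_le_compat_l; nra). lra. }
  assert (Hu : 0 <= u <= 1 / 2) by (unfold u, A in *; split; [lra|nra]).
  replace H with (1 - u) by (unfold u; ring).
  destruct (neg_ln1m_bounds u ltac:(lra)) as [M1 M2]. split; [|lra].
  assert (u ^ 2 / (1 - u) <= 2 * u ^ 2) by (apply Rle_div_l; [lra|]; pose proof (pow2_ge_0 u); nra).
  assert (u ^ 2 <= mu ^ 2 * a * A).
  { apply Rle_trans with ((mu * A) ^ 2); [apply pow_incr; lra|].
    replace ((mu * A) ^ 2) with (mu ^ 2 * A * A) by ring.
    apply Rmult_le_compat_r; [lra|apply Rmult_le_compat_l; [apply pow2_ge_0|lra]]. }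
  lra.
Qed.

Lemma one_step_estimate :
  Rabs (ln H + lam * (2 / nu) * (ln (1 + nu * y / 2) - ln (1 + nu * (y - d) / 2))) <=
  a * y * (Rabs (lam - mu) + lam * (e1 + C1 * a) + et / 2 + 2 * mu ^ 2 * a).
Proof.
  pose proof scale_range. pose proof psi_increment_bounds as [P1 P2]. pose proof ln_H_bounds as [L1 L2].
  assert (Hl1 : lam * (A - A * e1) <= lam * (2 / nu * (ln (1 + nu * y / 2) - ln (1 + nu * (y - d) / 2))))
    by (apply Rmult_le_compat_l; lra).
  assert (Hl2 : lam * (2 / nu * (ln (1 + nu * y / 2) - ln (1 + nu * (y - d) / 2)))
    <= lam * (A + A * e1 + A * (C1 * a))) by (apply Rmult_le_compat_l; lra).
  pose proof (Rle_abs (lam - mu)). pose proof (Rle_abs (- (lam - mu))). rewrite Rabs_Ropp in *.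
  assert (0 <= A * lam * (C1 * a)) by (unfold C1; apply Rmult_le_pos; [nra|]; apply Rmult_le_pos;
    [apply Rmult_le_pos; [apply Rmult_le_pos; [lra|apply pow2_ge_0]|lra]|lra]).
  assert (0 <= A * mu ^ 2 * a) by (apply Rmult_le_pos; [apply Rmult_le_pos; [lra|apply pow2_ge_0]|lra]).
  assert (0 <= A * et) by nra.
  fold A. apply Rabs_le. split; nra.
Qed.

End OneStep.

(** * Iterating the one-step estimate *)

Definition approx (e x u : R) : Prop := exp (- e) * u <= x <= exp e * u.

Lemma approx_refl x : approx 0 x x.
Proof. unfold approx. rewrite Ropp_0, exp_0. lra. Qed.

Lemma approx_mult e1 e2 x1 x2 u1 u2 : 0 <= u1 -> 0 <= u2 ->
  approx e1 x1 u1 -> approx e2 x2 u2 -> approx (e1 + e2) (x1 * x2) (u1 * u2).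
Proof.
  unfold approx. intros Hu1 Hu2 [L1 U1] [L2 U2].
  rewrite Ropp_plus_distr, !exp_plus.
  pose proof (exp_pos (- e1)). pose proof (exp_pos (- e2)).
  assert (0 <= exp (- e1) * u1) by nra. assert (0 <= exp (- e2) * u2) by nra.
  split.
  - replace (exp (- e1) * exp (- e2) * (u1 * u2)) with ((exp (- e1) * u1) * (exp (- e2) * u2)) by ring.
    apply Rmult_le_compat; lra.
  - replace (exp e1 * exp e2 * (u1 * u2)) with ((exp e1 * u1) * (exp e2 * u2)) by ring.
    apply Rmult_le_compat; lra.
Qed.

Lemma approx_weaken e e' x u : e <= e' -> 0 <= u -> approx e x u -> approx e' x u.
Proof.
  unfold approx. intros He Hu [L U].
  pose proof (exp_le_compat _ _ He). pose proof (exp_le_compat (- e') (- e) ltac:(lra)).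
  split; [eapply Rle_trans; [|exact L]|eapply Rle_trans; [exact U|]]; apply Rmult_le_compat_r; lra.
Qed.

Lemma approx_cancel e x u c : 0 < c -> approx e (x * c) (u * c) -> approx e x u.
Proof.
  unfold approx. intros Hc [L U].
  split; apply (Rmult_le_reg_r c); auto; rewrite ?Rmult_assoc; auto.
Qed.

Lemma approx_exp X e u : Rabs X <= e -> 0 <= u -> approx e (exp X * u) u.
Proof.
  intros HX Hu. apply Rabs_le_between in HX.
  split; apply Rmult_le_compat_r; auto; apply exp_le_compat; lra.
Qed.

Fixpoint prod_from (rho : nat -> R) (K j : nat) : R :=
  match j with
  | O => 1
  | S j' => prod_from rho K j' * rho (K + S j')%nat
  end.

Lemma prod_from_range rho K j : (forall n, (K < n)%nat -> 0 <= rho n <= 1) -> 0 <= prod_from rho K j <= 1.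
Proof. intros H. induction j; simpl; [lra|]. specialize (H (K + S j)%nat ltac:(lia)). nra. Qed.

Lemma iterate_approx (Phi : nat -> R -> R) (T Hf : nat -> R -> R) (psi : R -> R) (rho : nat -> R)
  (eps : R) (K : nat) :
  (forall n y, 0 <= y <= 1 -> Phi (S n) y = Phi n (T (S n) y) * Hf (S n) y) ->
  (forall n y, (K < n)%nat -> 0 <= y <= 1 -> 0 <= T n y <= rho n * y) ->
  (forall n, (K < n)%nat -> 0 <= rho n <= 1) ->
  (forall n y, (K < n)%nat -> 0 <= y <= 1 ->
     approx (eps * ((1 - rho n) * y)) (Hf n y * psi (T n y)) (psi y)) ->
  (forall y, 0 <= y <= 1 -> 0 <= Phi K y) -> (forall y, 0 < psi y) ->
  0 <= eps ->
  forall j y, 0 <= y <= 1 -> exists z, 0 <= z <= prod_from rho K j * y /\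
    approx (eps * (y - z)) (Phi (K + j)%nat y * psi z) (Phi K z * psi y).
Proof.
  intros HPhi HT Hrho Hloc HPK Hpsi Heps.
  induction j as [|j IH]; intros y Hy.
  - exists y. rewrite Nat.add_0_r, Rminus_diag, Rmult_0_r. simpl. split; [lra|apply approx_refl].
  - set (n := (K + S j)%nat).
    assert (Hn : (K < n)%nat) by (unfold n; lia).
    destruct (Hrho n Hn) as [Hr0 Hr1]. destruct (HT n y Hn Hy) as [HT0 HT1].
    destruct (IH (T n y) ltac:(nra)) as [z [[Hz0 Hz1] Hz]].
    pose proof (prod_from_range rho K j Hrho).
    assert (HPz : 0 <= Phi K z) by (apply HPK; split; nra).
    pose proof (Hpsi y). pose proof (Hpsi (T n y)).
    exists z. split.
    + split; auto. simpl; fold n.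
      assert (prod_from rho K j * T n y <= prod_from rho K j * (rho n * y)) by (apply Rmult_le_compat_l; lra).
      nra.
    + replace (Phi n y) with (Phi (K + j)%nat (T n y) * Hf n y)
        by (unfold n; rewrite Nat.add_succ_r; symmetry; apply HPhi, Hy).
      apply (approx_cancel _ _ _ (psi (T n y))); [apply Hpsi|].
      apply (approx_weaken (eps * (T n y - z) + eps * ((1 - rho n) * y))); [nra|
        apply Rmult_le_pos; [apply Rmult_le_pos|]; lra|].
      replace (Phi (K + j)%nat (T n y) * Hf n y * psi z * psi (T n y))
        with ((Phi (K + j)%nat (T n y) * psi z) * (Hf n y * psi (T n y))) by ring.
      replace (Phi K z * psi y * psi (T n y)) with ((Phi K z * psi (T n y)) * psi y) by ring.
      apply approx_mult; [apply Rmult_le_pos; lra|lra|exact Hz|apply Hloc; auto].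
Qed.

Fixpoint defect_sum (rho : nat -> R) (n : nat) : R :=
  match n with O => 0 | S n' => defect_sum rho n' + (1 - rho (S n')) end.

Lemma defect_sum_S rho N : defect_sum rho (S N) = sum_f_R0 (fun i => 1 - rho (S i)) N.
Proof. induction N as [|N IH]; [simpl; ring|]. simpl in *. rewrite IH. ring. Qed.

(* From rho <= exp(rho - 1): the tail product is at most exp of minus the
   sum of the defects 1 - rho_i over K < i <= K + j. *)
Lemma prod_from_le_exp rho K j : (forall n, (K < n)%nat -> 0 <= rho n <= 1) ->
  prod_from rho K j <= exp (defect_sum rho K - defect_sum rho (K + j)).
Proof.
  intros H. induction j as [|j IH]; [simpl; rewrite Nat.add_0_r, Rminus_diag, exp_0; lra|].
  simpl prod_from. rewrite Nat.add_succ_r. simpl defect_sum.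
  replace (defect_sum rho K - (defect_sum rho (K + j) + (1 - rho (S (K + j)))))
    with ((defect_sum rho K - defect_sum rho (K + j)) + (rho (S (K + j)) - 1)) by ring.
  rewrite exp_plus. pose proof (prod_from_range rho K j H).
  destruct (H (S (K + j)) ltac:(lia)). pose proof (exp_ineq1_le (rho (S (K + j)) - 1)).
  apply Rmult_le_compat; lra.
Qed.

Lemma prod_from_cv0 rho K : (forall n, (1 <= n)%nat -> 0 <= rho n <= 1) ->
  cv_infty (fun N => sum_f_R0 (fun i => 1 - rho (S i)) N) -> Un_cv (prod_from rho K) 0.
Proof.
  intros H Hinf eps He.
  assert (H' : forall n, (K < n)%nat -> 0 <= rho n <= 1) by (intros; apply H; lia).
  destruct (Hinf (defect_sum rho K - ln eps)) as [N HN].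
  exists (S N). intros j Hj. unfold R_dist. rewrite Rminus_0_r.
  pose proof (prod_from_range rho K j H'). rewrite Rabs_pos_eq by lra.
  eapply Rle_lt_trans; [apply prod_from_le_exp; auto|].
  specialize (HN (K + j - 1)%nat ltac:(lia)).
  replace (K + j)%nat with (S (K + j - 1)) by lia. rewrite defect_sum_S.
  rewrite <- (exp_ln eps) by auto. apply exp_increasing. lra.
Qed.

Lemma approx_close (Phi P Pz FK e dl : R) : 0 < dl <= 1 / 2 -> 0 <= e -> exp e <= 1 + dl ->
  0 <= Phi <= 1 -> 0 < P <= 1 -> 1 - dl <= Pz <= 1 -> 1 - dl <= FK <= 1 ->
  approx e (Phi * Pz) (FK * P) -> Rabs (Phi - P) <= 2 * dl.
Proof.
  intros Hdl He Hexp HPhi HP HPz HFK [L U].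
  pose proof (exp_pos e). pose proof (exp_pos (- e)).
  assert (Hinv : 1 - dl <= exp (- e)).
  { rewrite exp_Ropp.
    replace (/ exp e) with (1 / exp e) by (field; apply Rgt_not_eq, exp_pos).
    apply Rle_div_r; [apply exp_pos|]. nra. }
  apply Rabs_le. split.
  - assert ((1 - dl) * ((1 - dl) * P) <= Phi * Pz).
    { eapply Rle_trans; [|exact L]. apply Rmult_le_compat; try nra. }
    nra.
  - assert (Phi * Pz <= (1 + dl) * P).
    { eapply Rle_trans; [exact U|]. apply Rmult_le_compat; nra. }
    nra.
Qed.

(** * Convergence of the generating functions *)

Lemma fmom_nonneg p s l : is_pmf p -> fmom p s l -> 0 <= l.
Proof.
  intros [Hp _] H. apply is_series_Reals in H.
  apply (series_nonneg _ _ (fun k => Rmult_le_pos _ _ (pos_INR _) (Hp k)) H).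
Qed.

Lemma cv_ext (u v : nat -> R) l : (forall n, u n = v n) -> Un_cv u l -> Un_cv v l.
Proof. intros H Hu e He. destruct (Hu e He) as [N HN]. exists N. intros n Hn. rewrite <- H. auto. Qed.

Lemma cv_abs_sub u l : Un_cv u l -> Un_cv (fun n => Rabs (u n - l)) 0.
Proof.
  intros H e He. destruct (H e He) as [N HN]. exists N. intros n Hn.
  unfold R_dist in *. rewrite Rminus_0_r, Rabs_Rabsolu. auto.
Qed.

(* T(y) = 1 - G(1 - y): one step of the branching mechanism seen from 1. *)
Definition pgf_defect (p : nat -> R) (y : R) : R := 1 - pgf p (1 - y).

Lemma pgf_defect_range p r y : is_pmf p -> fmom p 1 r -> 0 <= y <= 1 ->
  0 <= pgf_defect p y <= r * y.
Proof.
  intros Hp Hr Hy. pose proof (pgf_lower1 p y r Hp Hy Hr). pose proof (pgf_range p (1 - y) Hp ltac:(lra)).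
  unfold pgf_defect. lra.
Qed.

Lemma psi_ratio_exp nu lam H y t : 0 < nu -> 0 < H ->
  H * nb_psi nu lam t =
  exp (ln H + lam * (2 / nu) * (ln (1 + nu * y / 2) - ln (1 + nu * (y - (y - t)) / 2))) * nb_psi nu lam y.
Proof.
  intros Hnu HH. unfold nb_psi. rewrite <- exp_plus. rewrite <- (exp_ln H) at 1 by auto.
  rewrite <- exp_plus. f_equal. replace (y - (y - t)) with t by ring. field. lra.
Qed.

Section LimitPgf.
Variables (g h : nat -> nat -> R) (rho : nat -> R) (Gd : nat -> nat -> R) (m1 m2 : nat -> R)
  (nu lambda : R).
Hypotheses
  (Hg : forall n, (1 <= n)%nat -> is_pmf (g n))
  (Hh : forall n, (1 <= n)%nat -> is_pmf (h n))
  (Hrho : forall n, (1 <= n)%nat -> fmom (g n) 1 (rho n))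
  (HGd : forall n s, (1 <= n)%nat -> (1 <= s)%nat -> fmom (g n) s (Gd n s))
  (Hm1 : forall n, (1 <= n)%nat -> fmom (h n) 1 (m1 n))
  (Hm2 : forall n, (1 <= n)%nat -> fmom (h n) 2 (m2 n))
  (Hi1 : forall n, (1 <= n)%nat -> rho n < 1)
  (Hi2 : Un_cv rho 1)
  (Hi3 : cv_infty (fun N => sum_f_R0 (fun i => 1 - rho (S i)) N))
  (Hnu : 0 < nu)
  (Hii : Un_cv (fun n => Gd n 2%nat / (1 - rho n)) nu)
  (Hiii : forall s, (3 <= s)%nat -> Un_cv (fun n => Gd n s / (1 - rho n)) 0)
  (Hiv1 : Un_cv (fun n => m1 n / (1 - rho n)) lambda)
  (Hiv2 : Un_cv (fun n => m2 n / (1 - rho n)) 0).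

Let a n := 1 - rho n.
Let be n := Gd n 2%nat / a n.
Let ga n := Gd n 3%nat / a n.
Let mu n := m1 n / a n.
Let et n := m2 n / a n.

Let err n := Rabs (lambda - mu n)
  + lambda * (Rabs (be n - nu) / 2 + ga n / 6 + nu / 2 * (1 + be n / 2) ^ 2 * (1 + nu / 2) * a n)
  + et n / 2 + 2 * mu n ^ 2 * a n.

Lemma rho_range n : (1 <= n)%nat -> 0 <= rho n < 1.
Proof. intros Hn. split; [apply (fmom_nonneg (g n) 1); auto|auto]. Qed.

Lemma scaled_nonneg x n : (1 <= n)%nat -> 0 <= x -> 0 <= x / a n.
Proof.
  intros Hn Hx. pose proof (rho_range n Hn). unfold a.
  apply Rmult_le_pos; auto. apply Rlt_le, Rinv_0_lt_compat; lra.
Qed.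

Lemma lambda_nonneg : 0 <= lambda.
Proof.
  destruct (Rle_or_lt 0 lambda) as [|Hneg]; auto.
  destruct (Hiv1 (- lambda) ltac:(lra)) as [N HN]. specialize (HN (S N) ltac:(lia)).
  pose proof (scaled_nonneg (m1 (S N)) (S N) ltac:(lia) (fmom_nonneg _ _ _ (Hh (S N) ltac:(lia))
    (Hm1 (S N) ltac:(lia)))).
  unfold R_dist, a in *. rewrite Rabs_pos_eq in HN; lra.
Qed.

Lemma a_cv : Un_cv a 0.
Proof.
  apply (cv_ext (fun n => 1 - rho n)); [reflexivity|].
  replace 0 with (1 - 1) by ring. apply CV_minus; [apply cv_const|exact Hi2].
Qed.

Lemma err_cv : Un_cv err 0.
Proof.
  assert (Hbe : Un_cv be nu) by exact Hii.
  assert (Hmu : Un_cv mu lambda) by exact Hiv1.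
  assert (Hbe2 : Un_cv (fun n => nu / 2 * (1 + be n / 2) ^ 2 * (1 + nu / 2) * a n) 0).
  { replace 0 with (nu / 2 * ((1 + nu * / 2) * (1 + nu * / 2)) * (1 + nu / 2) * 0) by ring.
    apply (cv_ext (fun n => nu / 2 * ((1 + be n * / 2) * (1 + be n * / 2)) * (1 + nu / 2) * a n));
      [intros; simpl; field|].
    assert (B : Un_cv (fun n => 1 + be n * / 2) (1 + nu * / 2))
      by (apply CV_plus; [apply cv_const|apply CV_mult; [exact Hbe|apply cv_const]]).
    repeat apply CV_mult; auto using cv_const, a_cv. }
  assert (Hmu2 : Un_cv (fun n => 2 * mu n ^ 2 * a n) 0).
  { replace 0 with (2 * (lambda * lambda) * 0) by ring.
    apply (cv_ext (fun n => 2 * (mu n * mu n) * a n)); [intros; simpl; ring|].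
    repeat apply CV_mult; auto using cv_const, a_cv. }
  assert (Hlm : Un_cv (fun n => Rabs (lambda - mu n)) 0).
  { apply (cv_ext (fun n => Rabs (mu n - lambda))); [intros; apply Rabs_minus_sym|apply cv_abs_sub, Hmu]. }
  assert (Hdiv : forall u, Un_cv u 0 -> forall c, Un_cv (fun n => u n / c) 0).
  { intros u Hu c. replace 0 with (0 * / c) by ring. apply CV_mult; [exact Hu|apply cv_const]. }
  replace 0 with (0 + lambda * (0 + 0 + 0) + 0 + 0) by ring.
  repeat apply CV_plus; auto.
  apply CV_mult; [apply cv_const|]. repeat apply CV_plus; auto.
  - apply Hdiv, cv_abs_sub, Hbe.
  - apply Hdiv, (Hiii 3%nat); lia.
Qed.

Lemma one_step_bound n y : (1 <= n)%nat -> 0 <= y <= 1 -> mu n * a n <= 1 / 2 ->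
  Rabs (ln (pgf (h n) (1 - y)) + lambda * (2 / nu) *
    (ln (1 + nu * y / 2) - ln (1 + nu * (y - (y - pgf_defect (g n) y)) / 2))) <= a n * y * err n.
Proof.
  intros Hn Hy Hmua. pose proof (rho_range n Hn). pose proof (Hg n Hn). pose proof (Hh n Hn).
  assert (Hane : a n <> 0) by (unfold a; lra).
  assert (Ebe : be n * a n = Gd n 2%nat) by (unfold be; field; auto).
  assert (Ega : ga n * a n = Gd n 3%nat) by (unfold ga; field; auto).
  assert (Emu : mu n * a n = m1 n) by (unfold mu; field; auto).
  assert (Eet : et n * a n = m2 n) by (unfold et; field; auto).
  pose proof (pgf_upper2 (g n) y _ _ ltac:(auto) Hy (Hrho n Hn) (HGd n 2%nat Hn ltac:(lia))).
  pose proof (pgf_lower3 (g n) y _ _ _ ltac:(auto) Hy (Hrho n Hn) (HGd n 2%nat Hn ltac:(lia))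
    (HGd n 3%nat Hn ltac:(lia))).
  pose proof (pgf_lower1 (h n) y _ ltac:(auto) Hy (Hm1 n Hn)).
  pose proof (pgf_upper2 (h n) y _ _ ltac:(auto) Hy (Hm1 n Hn) (Hm2 n Hn)).
  pose proof (pgf_range (h n) (1 - y) ltac:(auto) ltac:(lra)).
  pose proof (pgf_defect_range (g n) (rho n) y ltac:(auto) (Hrho n Hn) Hy).
  assert (0 <= be n) by (apply scaled_nonneg, (fmom_nonneg (g n) 2), HGd; auto).
  assert (0 <= ga n) by (apply scaled_nonneg, (fmom_nonneg (g n) 3), HGd; auto).
  assert (0 <= mu n) by (apply scaled_nonneg, (fmom_nonneg (h n) 1), Hm1; auto).
  assert (0 <= et n) by (apply scaled_nonneg, (fmom_nonneg (h n) 2), Hm2; auto).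
  pose proof lambda_nonneg.
  apply one_step_estimate; unfold pgf_defect, a in *; auto; try lra.
  - assert (rho n * y <= y) by nra. lra.
  - rewrite Ebe, Ega. lra.
  - rewrite Ebe. lra.
  - rewrite Emu. lra.
  - rewrite Emu, Eet. lra.
Qed.

Lemma one_step_approx eps : 0 < eps -> exists K, forall n y, (K < n)%nat -> 0 <= y <= 1 ->
  approx (eps * ((1 - rho n) * y))
    (pgf (h n) (1 - y) * nb_psi nu lambda (pgf_defect (g n) y)) (nb_psi nu lambda y).
Proof.
  intros Heps. destruct (err_cv eps Heps) as [N1 HN1].
  assert (Hmua : Un_cv (fun n => mu n * a n) 0)
    by (replace 0 with (lambda * 0) by ring; apply CV_mult; [exact Hiv1|exact a_cv]).
  destruct (Hmua (1 / 2) ltac:(lra)) as [N2 HN2].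
  exists (Nat.max N1 N2). intros n y Hn Hy.
  assert (Hn1 : (1 <= n)%nat) by lia.
  specialize (HN1 n ltac:(lia)). specialize (HN2 n ltac:(lia)). unfold R_dist in HN1, HN2.
  rewrite Rminus_0_r in HN1, HN2. apply Rabs_def2 in HN1, HN2.
  pose proof (rho_range n Hn1). pose proof (pgf_lower1 (h n) y _ (Hh n Hn1) Hy (Hm1 n Hn1)).
  assert (0 <= mu n) by (apply scaled_nonneg, (fmom_nonneg (h n) 1), Hm1; auto).
  assert (0 <= mu n * a n) by (apply Rmult_le_pos; unfold a; lra).
  assert (Hmu : mu n * a n * y <= 1 / 2) by nra.
  assert (Emu : mu n * a n = m1 n) by (unfold mu; field; unfold a; lra).
  pose proof (one_step_bound n y Hn1 Hy ltac:(lra)) as Hstep.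
  assert (m1 n * y <= 1 / 2) by (rewrite <- Emu; lra).
  rewrite (psi_ratio_exp nu lambda _ y) by lra.
  apply approx_exp; [|apply Rlt_le, nb_psi_pos].
  eapply Rle_trans; [exact Hstep|]. fold (a n).
  rewrite (Rmult_comm eps). apply Rmult_le_compat_l; [unfold a; nra|lra].
Qed.

Lemma law_pgf_near1 K : exists c, 0 <= c /\ forall y, 0 <= y <= 1 -> 1 - c * y <= law_pgf g h K (1 - y).
Proof.
  induction K as [|K [c [Hc IH]]]; [exists 0; split; [lra|intros; simpl; lra]|].
  assert (Hn : (1 <= S K)%nat) by lia.
  pose proof (fmom_nonneg _ _ _ (Hh _ Hn) (Hm1 _ Hn)) as Hm.
  exists (c + m1 (S K)). split; [lra|]. intros y Hy. simpl.
  pose proof (pgf_lower1 (h (S K)) y _ (Hh _ Hn) Hy (Hm1 _ Hn)) as HH.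
  pose proof (pgf_defect_range (g (S K)) _ y (Hg _ Hn) (Hrho _ Hn) Hy) as HT.
  pose proof (rho_range _ Hn). unfold pgf_defect in HT.
  pose proof (pgf_range (g (S K)) (1 - y) (Hg _ Hn) ltac:(lra)) as HG.
  set (G := pgf (g (S K)) (1 - y)) in *.
  assert (HB : 0 <= pgf (h (S K)) (1 - y) <= 1) by (apply pgf_range; [apply Hh; lia|lra]).
  assert (HF : 0 <= law_pgf g h K G <= 1) by (apply (law_pgf_range g h Hg Hh); lra).
  assert (HGl : 1 - c * y <= law_pgf g h K G).
  { replace G with (1 - (1 - G)) by ring. eapply Rle_trans; [|apply IH; lra].
    assert (c * (1 - G) <= c * y) by (apply Rmult_le_compat_l; nra). lra. }
  nra.
Qed.

Lemma law_pgf_close n K y z c dl : 0 < dl <= 1 / 2 -> 0 <= z <= y -> y <= 1 ->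
  lambda * z <= dl -> c * z <= dl ->
  (forall x, 0 <= x <= 1 -> 1 - c * x <= law_pgf g h K (1 - x)) ->
  approx (ln (1 + dl) * (y - z)) (law_pgf g h n (1 - y) * nb_psi nu lambda z)
    (law_pgf g h K (1 - z) * nb_psi nu lambda y) ->
  Rabs (law_pgf g h n (1 - y) - nb_psi nu lambda y) <= 2 * dl.
Proof.
  intros Hdl Hz Hy Hlz Hcz HcK Happ. pose proof lambda_nonneg as Hlam.
  assert (Hep : 0 <= ln (1 + dl)) by (rewrite <- ln_1; apply ln_le; lra).
  apply (approx_close _ _ (nb_psi nu lambda z) (law_pgf g h K (1 - z)) (ln (1 + dl) * (y - z)) dl Hdl);
    [nra| | | | | |exact Happ].
  - apply Rle_trans with (exp (ln (1 + dl))); [apply exp_le_compat; nra|rewrite exp_ln; lra].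
  - apply (law_pgf_range g h Hg Hh). lra.
  - split; [apply nb_psi_pos|apply nb_psi_le1; lra].
  - pose proof (nb_psi_lower nu lambda z Hnu Hlam ltac:(lra)).
    pose proof (nb_psi_le1 nu lambda z Hnu Hlam ltac:(lra)). lra.
  - pose proof (HcK z ltac:(lra)). pose proof (law_pgf_range g h Hg Hh K (1 - z) ltac:(lra)). lra.
Qed.

(* Main analytic step: Phi_n(1 - y) -> psi(y) for 0 <= y <= 1.  Given eps,
   run the one-step estimate from a time K after which it holds with
   precision ln(1 + dl), and wait until the tail product rho_(K+1)...rho_n is so
   small that the iterated point z is negligible. *)
Theorem law_pgf_limit y : 0 <= y <= 1 -> Un_cv (fun n => law_pgf g h n (1 - y)) (nb_psi nu lambda y).
Proof.
  intros Hy eps Heps.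
  set (dl := Rmin (1 / 2) (eps / 4)).
  assert (Hdl : 0 < dl <= 1 / 2) by (split; [apply Rmin_glb_lt|apply Rmin_l]; lra).
  assert (Hdl2 : dl <= eps / 4) by apply Rmin_r.
  assert (Hep : 0 < ln (1 + dl)) by (rewrite <- ln_1; apply ln_increasing; lra).
  destruct (one_step_approx _ Hep) as [K HK].
  destruct (law_pgf_near1 K) as [c [Hc HcK]].
  pose proof lambda_nonneg as Hlam.
  assert (Hrr : forall n, (1 <= n)%nat -> 0 <= rho n <= 1) by (intros n Hn; pose proof (rho_range n Hn); lra).
  set (dp := dl / (1 + lambda + c)).
  assert (Hdp : 0 < dp) by (apply Rdiv_lt_0_compat; lra).
  assert (Hdpl : (lambda + c) * dp <= dl).
  { unfold dp. replace ((lambda + c) * (dl / (1 + lambda + c)))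
      with (dl * ((lambda + c) / (1 + lambda + c))) by (field; lra).
    assert ((lambda + c) / (1 + lambda + c) <= 1) by (apply Rle_div_l; lra). nra. }
  destruct (prod_from_cv0 rho K Hrr Hi3 dp Hdp) as [J HJ].
  exists (K + J)%nat. intros n Hn.
  specialize (HJ (n - K)%nat ltac:(lia)). unfold R_dist in HJ. rewrite Rminus_0_r in HJ.
  pose proof (prod_from_range rho K (n - K) (fun m Hm => Hrr m ltac:(lia))).
  rewrite Rabs_pos_eq in HJ by lra.
  destruct (iterate_approx (fun n y => law_pgf g h n (1 - y)) (fun n => pgf_defect (g n))
    (fun n y => pgf (h n) (1 - y)) (nb_psi nu lambda) rho (ln (1 + dl)) K) with (j := (n - K)%nat) (y := y)
    as [z [Hz Happ]]; auto; try lra.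
  - intros m x Hx. simpl. unfold pgf_defect. f_equal. f_equal. ring.
  - intros m x Hm Hx. apply pgf_defect_range; [apply Hg; lia|apply Hrho; lia|exact Hx].
  - intros m Hm. apply Hrr. lia.
  - intros x Hx. apply (law_pgf_range g h Hg Hh). lra.
  - intros x. apply nb_psi_pos.
  - replace (K + (n - K))%nat with n in Happ by lia.
    assert (Hz1 : z <= dp) by nra.
    unfold R_dist. apply Rle_lt_trans with (2 * dl); [|lra].
    apply (law_pgf_close n K y z c dl); auto; nra.
Qed.

End LimitPgf.

Lemma partial_sums_cv (p : nat -> nat -> R) (q : nat -> R) :
  (forall k, Un_cv (fun n => p n k) (q k)) -> forall k, Un_cv (fun n => sum_f_R0 (p n) k) (sum_f_R0 q k).
Proof. intros H k. induction k; simpl; [apply H|apply CV_plus; auto]. Qed.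

Theorem theorem5
  (g h : nat -> nat -> R)        (* g n = law of xi_{n,j}, h n = law of eps_n (n >= 1) *)
  (law : nat -> nat -> R)        (* law n = law of X_n *)
  (rho : nat -> R) (Gd : nat -> nat -> R) (m1 m2 : nat -> R)
  (nu lambda : R)
  (Hg : forall n, (1 <= n)%nat -> is_pmf (g n))
  (Hh : forall n, (1 <= n)%nat -> is_pmf (h n))
  (Hlaw0 : forall k, law O k = delta0 k)
  (HlawS : forall n k, (1 <= n)%nat ->
     infinite_sum (fun m => law (n - 1)%nat m * conv (conv_pow (g n) m) (h n) k)
                  (law n k))
  (Hrho : forall n, (1 <= n)%nat -> fmom (g n) 1 (rho n))
  (HGd : forall n s, (1 <= n)%nat -> (1 <= s)%nat -> fmom (g n) s (Gd n s))
  (Hm1 : forall n, (1 <= n)%nat -> fmom (h n) 1 (m1 n))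
  (Hm2 : forall n, (1 <= n)%nat -> fmom (h n) 2 (m2 n))
  (Hi1 : forall n, (1 <= n)%nat -> rho n < 1)
  (Hi2 : Un_cv rho 1)
  (Hi3 : cv_infty (fun N => sum_f_R0 (fun i => 1 - rho (S i)) N))
  (Hnu : 0 < nu)
  (Hii : Un_cv (fun n => Gd n 2%nat / (1 - rho n)) nu)
  (Hiii : forall s, (3 <= s)%nat -> Un_cv (fun n => Gd n s / (1 - rho n)) 0)
  (Hiv1 : Un_cv (fun n => m1 n / (1 - rho n)) lambda)
  (Hiv2 : Un_cv (fun n => m2 n / (1 - rho n)) 0) :
  conv_distr law (nb_pmf (2 * lambda / nu) (nu / (2 + nu))).
Proof.
  pose proof (lambda_nonneg g h rho m1 lambda Hg Hh Hrho Hm1 Hi1 Hiv1) as Hlam.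
  unfold conv_distr. apply partial_sums_cv.
  apply (pgf_continuity law _ (law_pgf g h) (fun x => nb_psi nu lambda (1 - x))).
  - intros n k. split; [apply (law_nonneg g h law)|apply (law_le1 g h law)]; assumption.
  - intros k. apply nb_pmf_range; auto.
  - intros n x Hx. apply (law_pgf_series g h law); auto; lra.
  - intros x Hx. apply nb_pmf_series; auto; lra.
  - intros x Hx. apply (cv_ext (fun n => law_pgf g h n (1 - (1 - x)))); [intros; f_equal; ring|].
    apply (law_pgf_limit g h rho Gd m1 m2 nu lambda); auto; lra.
Qed.
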